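(* Let $m>1$ be a multiperfect number, i.e. $m\mid\sigma(m)$. Write $m=\prod_{i=1}^{s} p_i^{e_i}$ with distinct primes $p_i$ and exponents $e_i\ge 1$, and let $L=\operatorname{lcm}(e_1+1,\dots,e_s+1)$. If $L$ is prime, then $m=6$.
   Context: $\sigma(n)=\sum_{d\mid n} d$ denotes the sum-of-divisors function. *)

From mathcomp Require Import all_boot.

Definition sigma (n : nat) : nat := \sum_(d <- divisors n) d.

Definition lcm_exp_succ (m : nat) : nat :=
  \big[lcmn/1]_(p <- primes m) (logn p m).+1.

From mathcomp Require Import all_boot cyclic zify.

Set Implicit Arguments.
Unset Strict Implicit.
Unset Printing Implicit Defensive.

(* Let q = L.  Every e_i + 1 > 1 divides the prime q, so every exponent is q - 1 and
   sigma(m) = prod_i (1 + p_i + ... + p_i^(q-1)).  For q = 2 the number m is squarefree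
   and its largest prime factor divides some p_i + 1, which forces m = 2 * 3.  For odd q,
   a prime dividing 1 + x + ... + x^(q-1) is q or is 1 mod q; hence every prime factor of
   m other than q exceeds 2q and contributes a factor q to sigma(m), while k = sigma(m)/m
   is odd, at least 3, and smaller than prod p/(p-1) over the primes of m.  Comparing the
   power of q forced into k with this product bound gives a contradiction. *)

Lemma dvdn_biglcm_seq (f : nat -> nat) s x :
  x \in s -> f x %| \big[lcmn/1]_(y <- s) f y.
Proof. by move=> xs; rewrite (big_rem _ xs) dvdn_lcml. Qed.

Lemma prod_rem_dvdn (f : nat -> nat) s x :
  \prod_(y <- rem x s) f y %| \prod_(y <- s) f y.
Proof.
have [xs|xNs] := boolP (x \in s); last by rewrite rem_id.
by rewrite (big_rem _ xs) dvdn_mull.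
Qed.

Lemma expn_size_dvd_prod (f : nat -> nat) s d :
  (forall x, x \in s -> d %| f x) -> d ^ size s %| \prod_(x <- s) f x.
Proof.
elim: s => [|y s IH] d_dvd; first by rewrite big_nil.
rewrite big_cons expnS dvdn_mul ?d_dvd ?mem_head // IH // => x xs.
by rewrite d_dvd // inE xs orbT.
Qed.

Lemma ltn_prod_seq (f g : nat -> nat) s : s != [::] ->
  (forall x, x \in s -> f x < g x) -> \prod_(x <- s) f x < \prod_(x <- s) g x.
Proof.
elim: s => [|y s IH] // _ fg; rewrite !big_cons.
have fg_s x : x \in s -> f x < g x by move=> xs; rewrite fg // inE xs orbT.
have le_s : \prod_(x <- s) f x <= \prod_(x <- s) g x.
  by rewrite big_seq [leqRHS]big_seq leq_prod // => x /fg_s /ltnW.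
have g_gt0 : 0 < \prod_(x <- s) g x.
  by rewrite big_seq prodn_cond_gt0 // => x /fg_s; case: (g x).
by have := fg y (mem_head _ _); nia.
Qed.

Lemma prod_leq_expn_size_prod_predn (s : seq nat) c :
  1 < c -> (forall x, x \in s -> 1 < x) ->
  \prod_(x <- s) x <= c ^ size s * \prod_(x <- s) x.-1.
Proof.
move=> c_gt1; elim: s => [|y s IH] s_gt1; first by rewrite !big_nil.
rewrite !big_cons expnS.
have y_gt1 : 1 < y by rewrite s_gt1 ?mem_head.
have /IH : forall x, x \in s -> 1 < x by move=> x xs; rewrite s_gt1 // inE xs orbT.
have : y <= c * y.-1 by nia.
set A := \prod_(x <- s) x; set B := \prod_(x <- s) x.-1; set C := c ^ size s; nia.
Qed.

(* Weierstrass' product inequality prod (1 - 1/x) >= 1 - size s / c, cleared of denominators. *)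
Lemma subn_size_prod_leq_prod_predn (s : seq nat) c :
  (forall x, x \in s -> c <= x) -> size s <= c ->
  (c - size s) * \prod_(x <- s) x <= c * \prod_(x <- s) x.-1.
Proof.
elim: s => [|y s IH] c_le size_le; first by rewrite !big_nil subn0.
rewrite !big_cons /= in size_le *.
have y_ge : c <= y by rewrite c_le ?mem_head.
have /IH /(_ (ltnW size_le)) : forall x, x \in s -> c <= x.
  by move=> x xs; rewrite c_le // inE xs orbT.
have : (c - (size s).+1) * y <= (c - size s) * y.-1.
  have -> : c - size s = (c - (size s).+1).+1 by lia.
  have : (c - (size s).+1).+1 <= y by lia.
  set d := c - _; nia.
set A := \prod_(x <- s) x; set B := \prod_(x <- s) x.-1; nia.
Qed.

Lemma prod_leq_double_expn_prod_predn (s : seq nat) q :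
  1 < q -> (forall x, x \in s -> 2 * q <= x) ->
  \prod_(x <- s) x <= 2 * q ^ (size s - q) * \prod_(x <- s) x.-1.
Proof.
move=> q_gt1 s_ge.
have split_prod (f : nat -> nat) :
    \prod_(x <- s) f x = \prod_(x <- take q s) f x * \prod_(x <- drop q s) f x.
  by rewrite -big_cat cat_take_drop.
have size_take_le : size (take q s) <= q by rewrite size_take; case: ltnP => // /ltnW.
have head_le : \prod_(x <- take q s) x <= 2 * \prod_(x <- take q s) x.-1.
  have size_le2 : size (take q s) <= 2 * q by lia.
  have take_ge x : x \in take q s -> 2 * q <= x by move/mem_take; apply: s_ge.
  have := subn_size_prod_leq_prod_predn take_ge size_le2.
  set B := \prod_(_ <- _) _; set A := \prod_(_ <- _) _ => le2.
  rewrite -(@leq_pmul2l q) ?(ltnW q_gt1) // mulnA [q * 2]mulnC; apply: leq_trans le2.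
  by rewrite leq_mul2r; apply/orP; right; lia.
have tail_le : \prod_(x <- drop q s) x <= q ^ (size s - q) * \prod_(x <- drop q s) x.-1.
  rewrite -size_drop; apply: prod_leq_expn_size_prod_predn => // x /mem_drop /s_ge; lia.
by rewrite (split_prod id) (split_prod predn) mulnACA -mulnA mulnA leq_mul.
Qed.

Lemma prime_dvd_prod_seq (f : nat -> nat) s r : prime r ->
  r %| \prod_(x <- s) f x -> exists2 x, x \in s & r %| f x.
Proof. by move=> r_pr; rewrite Euclid_dvd_prod // big_has => /hasP. Qed.

Definition geom_sum (x e : nat) : nat := \sum_(i < e.+1) x ^ i.

Lemma geom_sumS x e : geom_sum x e.+1 = 1 + x * geom_sum x e.
Proof.
rewrite /geom_sum big_ord_recl expn0 big_distrr /=; congr (_ + _).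
by apply: eq_bigr => i _; rewrite expnS.
Qed.

Lemma geom_sum1 x : geom_sum x 1 = x.+1.
Proof. by rewrite geom_sumS /geom_sum big_ord1 muln1 add1n. Qed.

Lemma geom_sum_predn x e : 0 < x -> x.-1 * geom_sum x e + 1 = x ^ e.+1.
Proof.
case: x => // y _; elim: e => [|e IH]; first by rewrite /geom_sum big_ord1 expn0 expn1; lia.
by rewrite geom_sumS expnS -IH /=; lia.
Qed.

Lemma expn_leq_geom_sum x e : x ^ e <= geom_sum x e.
Proof.
elim: e => [|e IH]; first by rewrite /geom_sum big_ord1.
by rewrite geom_sumS expnS; nia.
Qed.

Lemma expn_lt_geom_sum x e : x ^ e.+1 < geom_sum x e.+1.
Proof. by rewrite geom_sumS expnS; have := expn_leq_geom_sum x e; nia. Qed.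

Lemma geom_sum_predn_lt x e : 0 < x -> geom_sum x e * x.-1 < x ^ e.+1.
Proof. by move=> x_gt0; rewrite -(geom_sum_predn e x_gt0) mulnC addn1. Qed.

Lemma geom_sum_mod x e r : x = 1 %[mod r] -> geom_sum x e = e.+1 %[mod r].
Proof.
move=> x1; rewrite /geom_sum -modn_summ.
rewrite (eq_bigr (fun _ => 1 %% r)) => [|i _]; last by rewrite -modnXm x1 modnXm exp1n.
by rewrite sum_nat_const card_ord modnMmr muln1.
Qed.

Lemma sum_add_divisors p e ds :
  \sum_(d <- PrimeDecompAux.add_divisors (p, e) ds) d = geom_sum p e * \sum_(d <- ds) d.
Proof.
rewrite /PrimeDecompAux.add_divisors.
elim: e => [|e IH]; first by rewrite /geom_sum big_ord1 mul1n.
rewrite iterS /=; set T := iter _ _ _.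
rewrite (perm_big ([seq NatTrec.mul p i | i <- T] ++ ds)); last by rewrite perm_merge.
rewrite big_cat /= big_map geom_sumS mulnDl mul1n addnC -mulnA -IH big_distrr /=.
by congr (_ + _); apply: eq_bigr => i _; rewrite natTrecE.
Qed.

Lemma sigma_prod_primes n : sigma n = \prod_(p <- primes n) geom_sum p (logn p n).
Proof.
rewrite /sigma /divisors prime_decompE.
elim: (primes n) => [|p s IH]; first by rewrite /= big_seq1 big_nil.
by rewrite /= big_cons sum_add_divisors IH.
Qed.

Lemma expn_gcdn_mod x a b r : 0 < a ->
  x ^ a = 1 %[mod r] -> x ^ b = 1 %[mod r] -> x ^ gcdn a b = 1 %[mod r].
Proof.
move=> a_gt0 xa xb; case: (egcdnP b a_gt0) => ka kb Ea _.
have: x ^ (ka * a) = 1 %[mod r] by rewrite mulnC expnM -modnXm xa modnXm exp1n.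
rewrite Ea expnD [kb * b]mulnC expnM -modnMml -modnXm xb modnXm exp1n modnMml.
by rewrite mul1n.
Qed.

(* The multiplicative order of x modulo r divides both q and r - 1. *)
Lemma prime_dvd_geom_sum x q r : prime q -> prime r ->
  r %| geom_sum x q.-1 -> r = q \/ q %| r.-1.
Proof.
move=> q_pr r_pr r_dvd; have q_gt1 := prime_gt1 q_pr; have r_gt1 := prime_gt1 r_pr.
have r_ndvd_x : ~~ (r %| x).
  apply/negP => r_dvd_x; move: r_dvd; rewrite -(prednK (n := q.-1)); last by lia.
  by rewrite geom_sumS dvdn_addl ?dvdn_mulr // dvdn1 => /eqP r1; rewrite r1 in r_gt1.
have x_gt0 : 0 < x by rewrite lt0n; apply: contraNneq r_ndvd_x => ->.
have xq : x ^ q = 1 %[mod r].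
  rewrite -(prednK (ltnW q_gt1)) -geom_sum_predn // -modnDml.
  by case/dvdnP: r_dvd => c ->; rewrite mulnA modnMl.
have xr : x ^ r.-1 = 1 %[mod r].
  by rewrite -(totient_prime r_pr) Euler_exp_totient // coprime_sym prime_coprime.
have [|q_ndvd] := boolP (q %| r.-1); first by right.
left; have x1 : x = 1 %[mod r].
  have /eqP q_coprime : coprime q r.-1 by rewrite prime_coprime.
  by have := expn_gcdn_mod (prime_gt0 q_pr) xq xr; rewrite q_coprime expn1.
have := geom_sum_mod q.-1 x1; rewrite (prednK (ltnW q_gt1)).
case/dvdnP: r_dvd => c ->; rewrite modnMl => /esym/eqP.
by rewrite -/(r %| q) dvdn_prime2 // => /eqP.
Qed.

Lemma logn_primes_lcm_exp_succ m p : prime (lcm_exp_succ m) -> p \in primes m ->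
  logn p m = (lcm_exp_succ m).-1.
Proof.
move=> L_pr p_m.
have p_dvd : (logn p m).+1 %| lcm_exp_succ m.
  exact: (dvdn_biglcm_seq (fun p => (logn p m).+1)).
have p_ne1 : (logn p m).+1 != 1 by rewrite eqSS -lt0n logn_gt0.
by move/(prime_nt_dvdP L_pr p_ne1): p_dvd => <-.
Qed.

Section UniformExponent.

Variables m e : nat.
Hypothesis logn_m : forall p, p \in primes m -> logn p m = e.

Lemma prod_primes_expn : 0 < m -> m = \prod_(p <- primes m) p ^ e.
Proof.
move=> m_gt0; rewrite {1}(prod_prime_decomp m_gt0) prime_decompE big_map.
by apply: eq_big_seq => p /logn_m /= ->.
Qed.

Lemma sigma_prod_geom_sum : sigma m = \prod_(p <- primes m) geom_sum p e.
Proof. by rewrite sigma_prod_primes; apply: eq_big_seq => p /logn_m ->. Qed.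

End UniformExponent.

Lemma squarefree_multiperfect_eq6 m : 1 < m ->
  (forall p, p \in primes m -> logn p m = 1) -> m %| sigma m -> m = 6.
Proof.
move=> m_gt1 logn_m m_dvd; have m_gt0 : 0 < m by lia.
have primes_pr p : p \in primes m -> prime p by rewrite mem_primes => /andP[].
pose M := max_pdiv m; have M_pr : prime M := max_pdiv_prime m_gt1.
have M_m : M \in primes m by rewrite mem_primes M_pr m_gt0 max_pdiv_dvd.
have /(prime_dvd_prod_seq M_pr) [p p_m M_dvd] : M %| \prod_(p <- primes m) p.+1.
  rewrite -(eq_big_seq _ (fun p _ => geom_sum1 p)) -(sigma_prod_geom_sum logn_m).
  by apply: dvdn_trans m_dvd; move: M_m; rewrite mem_primes => /and3P[].
have p_pr := primes_pr p p_m.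
have M_eq : M = p.+1.
  have [M_p|M_ne] := eqVneq M p; last first.
    by have := max_pdiv_max p_m; have := dvdn_leq (ltn0Sn p) M_dvd; lia.
  move: M_dvd; rewrite M_p -addn1 dvdn_addr // dvdn1 => /eqP p1.
  by rewrite p1 in p_pr.
have p2 : p = 2.
  case: (even_prime p_pr) => // p_odd; case: (even_prime M_pr); rewrite M_eq.
    by case=> p1; rewrite p1 in p_pr.
  by rewrite /= p_odd.
have primes_m : perm_eq (primes m) [:: 2; 3].
  apply: uniq_perm; rewrite ?primes_uniq // => r; rewrite !inE.
  apply/idP/idP => [r_m|/orP[] /eqP ->]; last 2 first.
  - by rewrite -p2.
  - by rewrite -[3]/(2.+1) -p2 -M_eq.
  have := prime_gt1 (primes_pr r r_m); have := max_pdiv_max r_m.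
  by rewrite -/M M_eq p2; case: r {r_m} => [|[|[|[]]]].
by rewrite (prod_primes_expn logn_m m_gt0) (perm_big _ primes_m) !big_cons big_nil.
Qed.

Section OddPrimeExponent.

Variables m q k : nat.
Hypothesis q_pr : prime q.
Hypothesis q_gt2 : 2 < q.
Hypothesis m_gt1 : 1 < m.
Hypothesis logn_m : forall p, p \in primes m -> logn p m = q.-1.
Hypothesis sigma_m : sigma m = k * m.

Let m_gt0 : 0 < m := ltnW m_gt1.

Lemma prime_dvd_sigma r : prime r -> r %| sigma m -> r = q \/ q %| r.-1.
Proof.
move=> r_pr; rewrite (sigma_prod_geom_sum logn_m).
by case/(prime_dvd_prod_seq r_pr) => p _; apply: prime_dvd_geom_sum.
Qed.

Lemma odd_k : odd k.
Proof.
apply: contraT; rewrite -dvdn2 => /(dvdn_mulr m); rewrite -sigma_m.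
by case/(@prime_dvd_sigma 2 isT) => [|]; [lia | rewrite dvdn1 => /eqP; lia].
Qed.

Lemma k_gt2 : 2 < k.
Proof.
have m_lt : m < sigma m.
  rewrite {1}(prod_primes_expn logn_m m_gt0) (sigma_prod_geom_sum logn_m).
  apply: ltn_prod_seq => [|p _]; first by rewrite primes_eq0 -leqNgt.
  by rewrite -(prednK (n := q.-1)) ?expn_lt_geom_sum //; lia.
have : 1 < k by move: m_lt; rewrite sigma_m -{1}[m]mul1n ltn_pmul2r.
by move: odd_k; case: (k) => [|[|[]]].
Qed.

Lemma q_dvd_predn_primes r : r \in primes m -> r != q -> q %| r.-1.
Proof.
move=> r_m r_ne_q; have r_dvd : r %| sigma m.
  by rewrite sigma_m dvdn_mull //; move: r_m; rewrite mem_primes => /and3P[].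
have r_pr : prime r by move: r_m; rewrite mem_primes => /andP[].
by case: (prime_dvd_sigma r_pr r_dvd) => // r_q; rewrite r_q eqxx in r_ne_q.
Qed.

Lemma primes_gt_double r : r \in primes m -> r != q -> 2 * q < r.
Proof.
move=> r_m r_ne_q; have q_dvd := q_dvd_predn_primes r_m r_ne_q.
have r_pr : prime r by move: r_m; rewrite mem_primes => /andP[].
have q_odd : odd q by case: (even_prime q_pr) => // q2; move: q_gt2; rewrite q2.
have r_odd : odd r.
  case: (even_prime r_pr) => // r2; move: q_dvd; rewrite r2 dvdn1 => /eqP; lia.
by rewrite mul2n dvdn_double_ltn ?prime_gt1.
Qed.

Lemma q_dvd_geom_sum r : r \in primes m -> r != q -> q %| geom_sum r q.-1.
Proof.
move=> r_m r_ne_q; have r_gt0 : 0 < r by have := primes_gt_double r_m r_ne_q; lia.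
have r1 : r = 1 %[mod q].
  by rewrite -(prednK r_gt0) -add1n -modnDmr (eqP (q_dvd_predn_primes r_m r_ne_q)).
by rewrite /dvdn (geom_sum_mod _ r1) prednK ?modnn ?prime_gt0.
Qed.

Lemma mem_rem_primes r : (r \in rem q (primes m)) = (r != q) && (r \in primes m).
Proof. by rewrite (mem_rem_uniq _ (primes_uniq m)) inE. Qed.

Lemma size_rem_leq_logn : size (rem q (primes m)) <= logn q k + q.-1.
Proof.
have k_gt0 : 0 < k by have := k_gt2; lia.
have logn_q_m : logn q m <= q.-1.
  have [/logn_m -> //|q_nm] := boolP (q \in primes m).
  by move: q_nm; rewrite -logn_gt0 lt0n negbK => /eqP ->.
have : q ^ size (rem q (primes m)) %| sigma m.
  rewrite (sigma_prod_geom_sum logn_m); apply: dvdn_trans (prod_rem_dvdn _ _ q).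
  apply: expn_size_dvd_prod => r; rewrite mem_rem_primes => /andP[r_ne_q r_m].
  exact: q_dvd_geom_sum.
by rewrite sigma_m pfactor_dvdn ?muln_gt0 ?k_gt0 // lognM //; lia.
Qed.

Lemma k_prod_predn_lt :
  k * q.-1 * \prod_(p <- rem q (primes m)) p.-1 < q * \prod_(p <- rem q (primes m)) p.
Proof.
have primes_lt : k * \prod_(p <- primes m) p.-1 < \prod_(p <- primes m) p.
  have primes_ne : primes m != [::] by rewrite primes_eq0 -leqNgt.
  have factor_lt p : p \in primes m -> geom_sum p q.-1 * p.-1 < p ^ q.-1 * p.
    rewrite mem_primes -expnSr => /andP[/prime_gt0 p_gt0 _].
    exact: geom_sum_predn_lt.
  have := ltn_prod_seq primes_ne factor_lt.
  rewrite !big_split /= -(sigma_prod_geom_sum logn_m) -(prod_primes_expn logn_m m_gt0).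
  by rewrite sigma_m [k * m]mulnC -mulnA ltn_pmul2l.
have [q_m|q_nm] := boolP (q \in primes m).
  by move: primes_lt; rewrite !(big_rem _ q_m) /= mulnA.
move: primes_lt; rewrite rem_id //; set A := \prod_(_ <- _) _; set B := \prod_(_ <- _) _.
by nia.
Qed.

Lemma odd_prime_exponent_absurd : False.
Proof.
set s := rem q (primes m).
have s_ge x : x \in s -> 2 * q <= x.
  by rewrite mem_rem_primes => /andP[x_ne_q /primes_gt_double /(_ x_ne_q) /ltnW].
have := prod_leq_double_expn_prod_predn (ltnW q_gt2) s_ge.
have := k_prod_predn_lt; have := size_rem_leq_logn; have := k_gt2.
rewrite -/s; set A := \prod_(_ <- s) _.-1; set B := \prod_(_ <- s) _.
set Q := q ^ (size s - q) => k_big size_le lt B_le.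
have kq_lt : k * q.-1 < 2 * q * Q.
  have : k * q.-1 * A < 2 * q * Q * A by nia.
  by rewrite ltn_mul2r => /andP[].
have [size_lt|size_ge] := ltnP (size s) q.
  move/ltnW: size_lt; rewrite -subn_eq0 => /eqP size_sub.
  by move: kq_lt; rewrite /Q size_sub expn0 muln1; nia.
have : q * Q <= k.
  by apply: dvdn_leq; [lia | rewrite /Q -expnS pfactor_dvdn //; lia].
nia.
Qed.

End OddPrimeExponent.

Theorem mainTheorem2 (m : nat) :
  1 < m -> m %| sigma m -> prime (lcm_exp_succ m) -> m = 6.
Proof.
move=> m_gt1 m_dvd L_pr; have logn_m := logn_primes_lcm_exp_succ L_pr.
have [L2|L_ne2] := eqVneq (lcm_exp_succ m) 2.
  by apply: squarefree_multiperfect_eq6 => // p /logn_m; rewrite L2.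
case/dvdnP: m_dvd => k sigma_m; exfalso.
apply: (odd_prime_exponent_absurd L_pr _ m_gt1 logn_m sigma_m).
by have := prime_gt1 L_pr; lia.
Qed.
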